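(* Let $n$ be even and $1\le\kappa<n$. Let $\mathcal{C}_1\subseteq\{0,1\}^n$ be the set of all balanced binary sequences of length $n$ (so $|\mathcal{C}_1|=\binom{n}{n/2}$) and let $\mathcal{C}_2\subseteq\{0,1\}^n$ be a $\kappa$-WMU code. Let $\mathcal{C}=\{\Psi(\mathbf{a},\mathbf{b}):\mathbf{a}\in\mathcal{C}_1,\mathbf{b}\in\mathcal{C}_2\}\subseteq\{\mathtt{A},\mathtt{T},\mathtt{C},\mathtt{G}\}^n$. Then $\mathcal{C}$ is a $\kappa$-WMU code and $\mathcal{C}$ is balanced.
   Context: $\Psi(\mathbf{a},\mathbf{b})=(c_1,\dots,c_n)$ with $c_i=\mathtt{A},\mathtt{T},\mathtt{C},\mathtt{G}$ according as $(a_i,b_i)=(0,0),(0,1),(1,0),(1,1)$. A binary sequence of length $n$ is balanced if exactly $n/2$ entries are $1$; a DNA sequence of length $n$ is balanced if exactly $n/2$ entries lie in $\{\mathtt{G},\mathtt{C}\}$; a code is balanced if every codeword is. A code $\mathcal{C}$ of length $n$ over an alphabet is $\kappa$-WMU if for all not necessarily distinct $\mathbf{a},\mathbf{b}\in\mathcal{C}$ and all $\kappa\le l<n$, $(a_1,\dots,a_l)\ne(b_{n-l+1},\dots,b_n)$. *)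

From HB Require Import structures.
From mathcomp Require Import all_boot.
Set Implicit Arguments. Unset Strict Implicit. Unset Printing Implicit Defensive.

Inductive nucleotide := nA | nT | nC | nG.

Definition nuc_to (x : nucleotide) : 'I_4 :=
  match x with nA => inord 0 | nT => inord 1 | nC => inord 2 | nG => inord 3 end.
Definition nuc_of (i : 'I_4) : nucleotide :=
  match val i with 0 => nA | 1 => nT | 2 => nC | _ => nG end.
Lemma nuc_toK : cancel nuc_to nuc_of.
Proof. by case; rewrite /nuc_of /= inordK. Qed.
HB.instance Definition _ := Finite.copy nucleotide (can_type nuc_toK).

Definition psi1 (a b : bool) : nucleotide :=
  match a, b with
  | false, false => nA | false, true => nT | true, false => nC | true, true => nG
  end.

Definition Psi n (a b : n.-tuple bool) : n.-tuple nucleotide :=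
  [tuple psi1 (tnth a i) (tnth b i) | i < n].

Definition balanced_bin n (a : n.-tuple bool) : bool :=
  count id a == n./2.

Definition balanced_dna n (c : n.-tuple nucleotide) : bool :=
  count (fun x => (x == nG) || (x == nC)) c == n./2.

Definition balanced_code n (C : {set n.-tuple nucleotide}) : Prop :=
  forall c, c \in C -> balanced_dna c.

Definition WMU (T : finType) n (kappa : nat) (C : {set n.-tuple T}) : Prop :=
  forall a b, a \in C -> b \in C -> forall l, kappa <= l < n ->
    take l (tval a) != drop (n - l) (tval b).

Definition C1 n : {set n.-tuple bool} := [set a | balanced_bin a].

Definition PsiCode n (A B : {set n.-tuple bool}) : {set n.-tuple nucleotide} :=
  [set Psi a b | a in A, b in B].

(** [Psi] is a bijection on every position whose inverse reads off both
    input bits: the first bit says whether the nucleotide is G or C, the second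
    one recovers [b].  Hence the GC-content of [Psi a b] is the weight of [a],
    and since prefixes and suffixes commute with the letterwise projection onto
    the second bit, an overlap between two codewords of the product code would
    project to an overlap between two codewords of [C2]. *)
From mathcomp Require Import all_boot.

Definition unpsi1 (x : nucleotide) : bool * bool :=
  match x with
  | nA => (false, false) | nT => (false, true)
  | nC => (true, false) | nG => (true, true)
  end.

Lemma psi1K (a b : bool) : unpsi1 (psi1 a b) = (a, b).
Proof. by case: a; case: b. Qed.

Lemma is_gc_unpsi1 (x : nucleotide) : (x == nG) || (x == nC) = (unpsi1 x).1.
Proof. by case: x; rewrite /= ?eqxx ?orbT //; apply/negbTE/norP; split; apply/eqP. Qed.

Lemma map_unpsi1_Psi n (a b : n.-tuple bool) :
  map unpsi1 (Psi a b) = zip a b.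
Proof.
rewrite /Psi /= -map_comp -(map_tnth_enum a) -(map_tnth_enum b) zip_map.
by apply: eq_map => i /=; rewrite psi1K.
Qed.

Lemma map_fst_Psi n (a b : n.-tuple bool) :
  map (fun x => (unpsi1 x).1) (Psi a b) = a.
Proof.
by rewrite (map_comp fst unpsi1)
  map_unpsi1_Psi -/(unzip1 _) unzip1_zip ?size_tuple.
Qed.

Lemma map_snd_Psi n (a b : n.-tuple bool) :
  map (fun x => (unpsi1 x).2) (Psi a b) = b.
Proof.
by rewrite (map_comp snd unpsi1)
  map_unpsi1_Psi -/(unzip2 _) unzip2_zip ?size_tuple.
Qed.

Lemma count_gc_Psi n (a b : n.-tuple bool) :
  count (fun x => (x == nG) || (x == nC)) (Psi a b) = count id a.
Proof.
by rewrite (eq_count is_gc_unpsi1) -(count_map (fun x => (unpsi1 x).1) id)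
  map_fst_Psi.
Qed.

Lemma WMU_map_tuple (T U : finType) (f : T -> U) n kappa
    (C : {set n.-tuple T}) (D : {set n.-tuple U}) :
  {in C, forall c, map_tuple f c \in D} -> WMU kappa D -> WMU kappa C.
Proof.
move=> fCD wmuD c c' cC c'C l hl.
apply: contraNneq (wmuD _ _ (fCD c cC) (fCD c' c'C) l hl).
by rewrite /= -map_take -map_drop => ->.
Qed.

Theorem lemma4 (n kappa : nat) (C2 : {set n.-tuple bool}) :
  ~~ odd n -> 1 <= kappa < n -> WMU kappa C2 ->
  WMU kappa (PsiCode (C1 n) C2) /\ balanced_code (PsiCode (C1 n) C2).
Proof.
move=> _ _ wmuC2; split.
- apply: (@WMU_map_tuple _ _ (fun x => (unpsi1 x).2) _ _ _ C2 _ wmuC2).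
  move=> _ /imset2P[a b _ bC2 ->].
  by rewrite (_ : map_tuple _ _ = b) //; apply: val_inj; rewrite /= map_snd_Psi.
- move=> _ /imset2P[a b aC1 _ ->].
  by rewrite /balanced_dna count_gc_Psi; rewrite inE in aC1.
Qed.
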